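(* Let $n$ be a positive integer, $\lambda$ an infinite cardinal, and $\tau$ a shift-continuous feebly compact $T_1$-topology on the semilattice $\exp_n\lambda$. Then for any point $x\in\exp_n\lambda$ and any open neighbourhood $U(x)$ of $x$ in $(\exp_n\lambda,\tau)$ there exist finitely many $x_1,\ldots,x_m\in{\uparrow}x\setminus\{x\}$ such that $${\uparrow}x\setminus\operatorname{cl}_{\exp_n\lambda}(U(x))\subseteq{\uparrow}x_1\cup\cdots\cup{\uparrow}x_m.$$
   Context: For a positive integer $n$ and a cardinal $\lambda$, $\exp_n\lambda=\{A\subseteq\lambda\colon |A|\leqslant n\}$, regarded as a semilattice under $\cap$; its natural order is inclusion. For $e$ in a semilattice, ${\uparrow}e=\{f\colon e\leqslant f\}$. A topology on a semilattice is shift-continuous if the semilattice operation is separately continuous. A topological space is feebly compact if every locally finite open cover of it is finite. *)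

From mathcomp Require Import all_boot.
From mathcomp Require Import finmap.
From mathcomp Require Import boolp classical_sets cardinality.

Set Implicit Arguments.
Unset Strict Implicit.
Unset Printing Implicit Defensive.

Local Open Scope classical_set_scope.

Definition exp_set (L : choiceType) (n : nat) :=
  {A : {fset L} | (#|` A| <= n)%N}.

Definition exp_meet (L : choiceType) (n : nat) (a b : exp_set L n) : exp_set L n :=
  exist (fun A : {fset L} => (#|` A| <= n)%N) (val a `&` val b)%fset
    (leq_trans (fsubset_leq_card (fsubsetIl (val a) (val b))) (valP a)).

Definition exp_le (L : choiceType) (n : nat) (e f : exp_set L n) : Prop :=
  exp_meet e f = e.

Definition upset (L : choiceType) (n : nat) (e : exp_set L n) : set (exp_set L n) :=
  [set f | exp_le e f].

Definition is_topology (X : Type) (op : set (set X)) : Prop :=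
  [/\ op set0, op setT,
      (forall U V, op U -> op V -> op (U `&` V)) &
      (forall F : set (set X), F `<=` op -> op (\bigcup_(U in F) U))].

Definition T1_topology (X : Type) (op : set (set X)) : Prop :=
  forall x y : X, x <> y -> exists U, [/\ op U, U x & ~ U y].

Definition closure_in (X : Type) (op : set (set X)) (A : set X) : set X :=
  [set x | forall U, op U -> U x -> U `&` A !=set0].

Definition continuous_map (X : Type) (op : set (set X)) (f : X -> X) : Prop :=
  forall V, op V -> op (f @^-1` V).

Definition shift_continuous (L : choiceType) (n : nat)
  (op : set (set (exp_set L n))) : Prop :=
  (forall a, continuous_map op (fun x => exp_meet a x)) /\
  (forall a, continuous_map op (fun x => exp_meet x a)).

Definition open_cover (X : Type) (op : set (set X)) (C : set (set X)) : Prop :=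
  C `<=` op /\ \bigcup_(U in C) U = setT.

Definition locally_finite (X : Type) (op : set (set X)) (C : set (set X)) : Prop :=
  forall x : X, exists W, [/\ op W, W x &
     finite_set [set U | C U /\ U `&` W !=set0]].

Definition feebly_compact (X : Type) (op : set (set X)) : Prop :=
  forall C : set (set X), open_cover op C -> locally_finite op C -> finite_set C.

From mathcomp Require Import all_boot.
From mathcomp Require Import finmap.
From mathcomp Require Import boolp classical_sets cardinality.
From mathcomp Require Import zify.

Set Implicit Arguments.
Unset Strict Implicit.
Unset Printing Implicit Defensive.

Local Open Scope classical_set_scope.

(* Upsets are clopen: the complement of ↑y is the preimage of the open set
   ~{y} under s ↦ y ∩ s, and ↑y is the preimage of the complement of the finite
   set of elements strictly below y.  Hence maximal elements (|z| = n) are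
   isolated points, and a sequence z_0, z_1, ... of maximal elements above x,
   outside a neighbourhood V of x, with pairwise intersections inside x, is a
   discrete family of isolated points, which feeble compactness forbids.  Such
   a sequence can be built greedily as soon as every finite G admits a maximal
   z above x, outside V, missing G \ x.
   Since λ is infinite, this gives by induction on n - |y| that every open set
   containing y contains a maximal element above y.  Finally, if the sets
   ↑(x ∪ {a}), a ∈ G \ x, never cover ↑x \ cl U, then for every finite G some
   z ∈ ↑x \ cl U misses G \ x, and a maximal element of a neighbourhood of z
   disjoint from U still misses G \ x: a forbidden sequence with V = U. *)

Section Topology.
Variables (X : Type) (op : set (set X)).
Hypothesis top : is_topology op.

Lemma open_setT : op setT.
Proof. by case: top. Qed.

Lemma open_setI U V : op U -> op V -> op (U `&` V).
Proof. by case: top => _ _ + _; apply. Qed.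

Lemma open_nbhs_subset A :
  (forall x, A x -> exists U, [/\ op U, U x & U `<=` A]) -> op A.
Proof.
move=> Anbhs; have [_ _ _ open_bigcup] := top.
have -> : A = \bigcup_(U in [set U | op U /\ U `<=` A]) U.
  apply/seteqP; split => [x /Anbhs[U [oU Ux UA]]|x [U [_ UA] /UA//]].
  by exists U.
by apply: open_bigcup => U [].
Qed.

Lemma open_bigcap_fset (I : choiceType) (s : {fset I}) (F : I -> set X) :
  (forall i, op (F i)) -> op (\bigcap_(i in [set` s]) F i).
Proof.
move=> oF; rewrite bigcap_fset.
by apply: big_ind => //; [apply: open_setT|apply: open_setI].
Qed.

Lemma not_closure_in U x :
  ~ closure_in op U x -> exists W, [/\ op W, W x & forall y, W y -> ~ U y].
Proof.
move=> /existsNP[W /not_implyP[oW /not_implyP[Wx /set0P/negP/negPn/eqP WU]]].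
by exists W; split=> // y Wy Uy; have : (W `&` U) y by []; rewrite WU.
Qed.

Hypothesis t1 : T1_topology op.

Lemma open_setC1 x : op (~` [set x]).
Proof.
apply: open_nbhs_subset => y /= yx; have [U [oU Uy Ux]] := t1 yx.
by exists U; split => // z Uz zx; apply: Ux; rewrite -zx.
Qed.

Definition discrete_seq (z : nat -> X) :=
  forall x, exists N k, [/\ op N, N x & forall j, N (z j) -> j = k].

Lemma not_feebly_compact_discrete_seq (z : nat -> X) :
  injective z -> (forall k, op [set z k]) -> discrete_seq z -> ~ feebly_compact op.
Proof.
move=> z_inj oz zdisc fc.
have o_out : op (~` range z).
  apply: open_nbhs_subset => x xz; have [N [k [oN Nx Nz]]] := zdisc x.
  exists (N `&` ~` [set z k]); split.
  - by apply: open_setI => //; apply: open_setC1.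
  - by split => // xk; apply: xz; exists k.
  - by move=> y [Ny yk] [j _ zjy]; subst y; apply: yk; rewrite /= (Nz j Ny).
pose C := range (fun k => [set z k]) `|` [set ~` range z].
have Ccover : open_cover op C.
  split; first by move=> _ [[k _ <-]|->].
  apply/seteqP; split => // x _.
  have [[k _ <-]|xz] := pselect (range z x); last by exists (~` range z); [right|].
  by exists [set z k]; [left; exists k|].
have Cfin : locally_finite op C.
  move=> x; have [N [k [oN Nx Nz]]] := zdisc x; exists N; split => //.
  apply: (@sub_finite_set _ _ [set [set z k]; ~` range z]).
    move=> _ [[[j _ <-]|->] meetN]; last by right.
    by left; case: meetN => _ [/= -> /Nz ->].
  by rewrite finite_setU; split; apply: finite_set1.
apply: infinite_nat; apply: (@sub_finite_set _ _ ((fun k => [set z k]) @^-1` C)).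
  by move=> k _; left; exists k.
apply: finite_preimage (fc C Ccover Cfin) => j k _ _ zjk.
by apply: z_inj; have : [set z j] (z j) by []; rewrite zjk.
Qed.

End Topology.

Lemma open_setC_finite (X : choiceType) (op : set (set X)) (A : set X) :
  is_topology op -> T1_topology op -> finite_set A -> op (~` A).
Proof.
move=> top t1 /finite_fsetP[s ->].
have -> : ~` [set` s] = \bigcap_(x in [set` s]) ~` [set x].
  apply/seteqP; split => [y ys x xs yx|y ys sy]; last exact: (ys y).
  by apply: ys; rewrite yx.
by apply: open_bigcap_fset => // x; apply: open_setC1.
Qed.

Section ExpSemilattice.
Variables (L : choiceType) (n : nat).
Implicit Types (x y z w : exp_set L n) (H : {fset L}).

Lemma upsetE x y : upset x y <-> (val x `<=` val y)%fset.
Proof.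
split => [<-|xy]; first exact: fsubsetIr.
by apply: val_inj; apply/fsetIidPl.
Qed.

Lemma upset_refl x : upset x x.
Proof. exact/upsetE/fsubset_refl. Qed.

Lemma upset_trans y x z : upset x y -> upset y z -> upset x z.
Proof. by move=> /upsetE xy /upsetE yz; apply/upsetE/(fsubset_trans xy). Qed.

Lemma upset_meet x y : upset (exp_meet x y) x.
Proof. exact/upsetE/fsubsetIl. Qed.

Definition exp_full z := #|` val z| = n.

Lemma exp_full_upset z : exp_full z -> upset z = [set z].
Proof.
move=> z_full; apply/seteqP; split => [w /upsetE zw|_ ->]; last exact: upset_refl.
apply/val_inj/eqP; rewrite eq_sym -(fsubset_leqif_cards zw).2 eqn_leq.
by rewrite fsubset_leq_card // z_full (valP w).
Qed.

Lemma exp_fullVsmall x : exp_full x \/ (#|` val x| < n)%N.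
Proof. by rewrite /exp_full ltn_neqAle (valP x) andbT; case: eqP; [left|right]. Qed.

Lemma exp_insert_subproof x a :
  (#|` val x| < n)%N -> (#|` (a |` val x)%fset| <= n)%N.
Proof.
rewrite cardfsU1 => x_small; apply: leq_trans x_small.
by rewrite -add1n leq_add2r leq_b1.
Qed.

Definition exp_insert x a (x_small : (#|` val x| < n)%N) : exp_set L n :=
  exist _ (a |` val x)%fset (exp_insert_subproof a x_small).

Lemma upset_insert x a (x_small : (#|` val x| < n)%N) : upset x (exp_insert a x_small).
Proof. exact/upsetE/fsubsetU1. Qed.

Lemma upset_insertE x a (x_small : (#|` val x| < n)%N) w :
  upset (exp_insert a x_small) w <-> a \in val w /\ upset x w.
Proof. by rewrite !upsetE /= fsubUset fsub1set; split => [/andP|[-> ->]]. Qed.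

Lemma exp_insert_neq x a (x_small : (#|` val x| < n)%N) :
  a \notin val x -> exp_insert a x_small <> x.
Proof. by move=> /[swap] /(congr1 val) /= <-; rewrite fset1U1. Qed.

Lemma sunflower_seq x (P : exp_set L n -> Prop) :
  (forall H, exists z, P z /\ [disjoint H `\` val x & val z]%fset) ->
  exists2 z : nat -> exp_set L n, forall k, P (z k) &
    forall j k, j != k -> (val (z j) `&` val (z k) `<=` val x)%fset.
Proof.
move=> /choice[f fP].
pose G k := iter k (fun G => G `|` val (f G))%fset fset0.
pose z k := f (G k).
have G_mono j k : (j <= k)%N -> (G j `<=` G k)%fset.
  move=> /subnK <-; elim: (k - j)%N => [|i IH]; first exact: fsubset_refl.
  by rewrite addSn /=; apply: fsubset_trans IH _; apply: fsubsetUl.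
have zG j k : (j < k)%N -> (val (z j) `<=` G k)%fset.
  by move=> /G_mono; apply: fsubset_trans; apply: fsubsetUr.
have kernel j k : (j < k)%N -> (val (z j) `&` val (z k) `<=` val x)%fset.
  move=> jk; apply/fsubsetP => a; rewrite in_fsetI => /andP[aj ak].
  apply: contraT => ax; have /fdisjointP/(_ a) := (fP (G k)).2.
  by rewrite in_fsetD ax (fsubsetP (zG _ _ jk)) // ak => /(_ isT).
exists z => [k|j k]; first exact: (fP _).1.
by case: ltngtP => // [jk|kj] _; [|rewrite fsetIC]; apply: kernel.
Qed.

Variable op : set (set (exp_set L n)).
Hypotheses (top : is_topology op) (t1 : T1_topology op).
Hypothesis shift : shift_continuous op.

Lemma open_upsetC y : op (~` upset y).
Proof. exact: shift.1 y _ (open_setC1 top t1 y). Qed.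

Lemma open_upset y : op (upset y).
Proof.
pose below := [set w | upset w y /\ w <> y].
have below_fin : finite_set below.
  apply: (@sub_finite_set _ _ (val @^-1` [set` fpowerset (val y)])).
    by move=> w [/upsetE wy _]; rewrite /= fpowersetE.
  by apply: finite_preimage (finite_fset _) => ? ? _ _; apply: val_inj.
(* [y ∩ s] always lies below [y]. *)
have -> : upset y = exp_meet y @^-1` ~` below.
  apply/seteqP; split => s /=; first by move=> ys [_]; apply.
  move=> s_above; apply: contrapT => ys; apply: s_above.
  by split; first exact: upset_meet.
exact: shift.1 y _ (open_setC_finite top t1 below_fin).
Qed.

Hypothesis n_gt0 : (0 < n)%N.

Lemma open_fdisjoint H : op [set s | [disjoint H & val s]%fset].
Proof.
have single a : {e : exp_set L n | val e = [fset a]%fset}.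
  have a_small : (#|` [fset a]%fset| <= n)%N by rewrite cardfs1.
  by exists (exist (fun A : {fset L} => (#|` A| <= n)%N) _ a_small).
have -> : [set s | [disjoint H & val s]%fset] =
    \bigcap_(a in [set` H]) ~` upset (sval (single a)).
  apply/seteqP; split => s /=.
    move=> /fdisjointP Hs a /Hs/negP aNs /upsetE.
    by rewrite (svalP (single a)) fsub1set.
  move=> Hs; apply/fdisjointP => a /Hs aNs; apply/negP => as_; apply/aNs/upsetE.
  by rewrite (svalP (single a)) fsub1set.
by apply: open_bigcap_fset => // a; apply: open_upsetC.
Qed.

Lemma sunflower_discrete x V (z : nat -> exp_set L n) :
  op V -> V x -> (forall k, upset x (z k) /\ ~ V (z k)) ->
  (forall j k, j != k -> (val (z j) `&` val (z k) `<=` val x)%fset) ->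
  discrete_seq op z.
Proof.
move=> oV Vx zP kernel w.
have [xw|xNw] := pselect (upset x w); last first.
  exists (~` upset x), 0%N; split => //; first exact: open_upsetC.
  by move=> j /(_ (zP j).1).
have [->|wx] := pselect (w = x).
  by exists V, 0%N; split => // j /(zP j).2.
have [b bw bx] : exists2 b, b \in val w & b \notin val x.
  apply/fsubsetPn; apply: contra_notN wx => wx.
  by apply/val_inj/eqP; rewrite eqEfsubset wx; apply/upsetE.
have [[k wk]|wN] := pselect (exists k, upset w (z k)); last first.
  exists (upset w), 0%N; split; [exact: open_upset|exact: upset_refl|].
  by move=> j wj; exfalso; apply: wN; exists j.
exists (upset w), k; split; [exact: open_upset|exact: upset_refl|].
move=> j wj; apply/eqP; apply: contraNT bx => jk.
apply: (fsubsetP (kernel j k jk)).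
by rewrite in_fsetI !(fsubsetP (proj1 (upsetE _ _) _) b bw).
Qed.

Hypothesis fc : feebly_compact op.

Lemma no_full_sunflower x V : op V -> V x ->
  ~ (forall H, exists z,
       [/\ exp_full z, upset x z & ~ V z] /\ [disjoint H `\` val x & val z]%fset).
Proof.
move=> oV Vx /sunflower_seq[z zP kernel].
have zx k : z k <> x by case: (zP k) => _ _ zV zk; apply: zV; rewrite zk.
apply: (not_feebly_compact_discrete_seq top t1 (z := z)) => //.
- move=> j k zjk; apply: contrapT => /eqP jk; apply: (zx k).
  apply/val_inj/eqP; rewrite eqEfsubset; apply/andP; split; last first.
    by case: (zP k) => _ /upsetE.
  by rewrite -[val (z k)]fsetIid -{1}zjk; apply: kernel.
- move=> k; case: (zP k) => z_full _ _.
  by rewrite -exp_full_upset //; apply: open_upset.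
- by apply: (sunflower_discrete oV Vx) => // k; case: (zP k).
Qed.

Hypothesis L_infinite : infinite_set [set: L].

Lemma exists_full_above y O : op O -> O y ->
  exists z, [/\ O z, exp_full z & upset y z].
Proof.
have [k yk] : exists k, (n - #|` val y| <= k)%N by exists (n - #|` val y|)%N.
elim: k y O yk => [|k IH] y O yk oO Oy.
all: have [y_full|y_small] := exp_fullVsmall y;
  first by exists y; split => //; apply: upset_refl.
  by move: yk; lia.
have [[y' [Oy' yy' y'y]]|y_isolated] :=
  pselect (exists y', [/\ O y', upset y y' & y' <> y]).
  have y_lt_y' : (#|` val y| < #|` val y'|)%N.
    apply/fproper_ltn_card; rewrite fproperEneq (proj1 (upsetE _ _) yy') andbT.
    by apply: contra_notN y'y => /eqP y_eq; apply: val_inj.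
  have [|z [Oz z_full y'z]] := IH y' O _ oO Oy'; first by move: yk; lia.
  by exists z; split => //; apply: upset_trans y'z.
exfalso.
have oOy := open_setI top oO (open_upset y).
apply: (no_full_sunflower oOy (conj Oy (upset_refl y))) => H.
have [a [_ /negP]] :=
  infinite_setN0 (infinite_setD L_infinite (finite_fset (H `|` val y)%fset)).
rewrite in_fsetU negb_or => /andP[aH ay].
pose y1 := exp_insert a y_small.
have y1k : (n - #|` val y1| <= k)%N by move: yk; rewrite /= cardfsU1 ay; lia.
have y1H : [disjoint H `\` val y & val y1]%fset.
  apply/fdisjointP => b; rewrite !inE negb_or => /andP[by_ bH].
  by rewrite by_ andbT; apply: contraNneq aH => <-.
have oO1 := open_setI top (open_upset y1) (open_fdisjoint (H `\` val y)%fset).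
have [z [[y1z zH] z_full _]] := IH y1 _ y1k oO1 (conj (upset_refl y1) y1H).
exists z; split => //; split => //; first exact: upset_trans (upset_insert _ _) y1z.
move=> [Oz yz]; apply: y_isolated; exists z; split => // zy.
by move: z_full; rewrite zy /exp_full; lia.
Qed.

Lemma full_off_closure U z H :
  ~ closure_in op U z -> [disjoint H & val z]%fset ->
  exists z', [/\ exp_full z', upset z z', ~ U z' & [disjoint H & val z']%fset].
Proof.
move=> /(@not_closure_in _ op)[W [oW Wz WU]] Hz.
have oO := open_setI top (open_setI top oW (open_upset z)) (open_fdisjoint H).
have [z' [[[Wz' zz'] Hz'] z'_full _]] :=
  exists_full_above oO (conj (conj Wz (upset_refl z)) Hz).
by exists z'; split => //; apply: WU.
Qed.

End ExpSemilattice.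

Theorem proposition9 (n : nat) (L : choiceType) (op : set (set (exp_set L n))) :
  (0 < n)%N ->
  infinite_set [set: L] ->
  is_topology op ->
  shift_continuous op ->
  feebly_compact op ->
  T1_topology op ->
  forall (x : exp_set L n) (U : set (exp_set L n)),
    op U -> U x ->
    exists xs : seq (exp_set L n),
      (forall y, y \in xs -> upset x y /\ y <> x) /\
      (upset x `\` closure_in op U
         `<=` [set z | exists2 y, y \in xs & upset y z]).
Proof.
move=> n_gt0 L_infinite top shift fc t1 x U oU Ux.
have [x_full|x_small] := exp_fullVsmall x.
  exists [::]; split => [y|z []]; first by rewrite in_nil.
  rewrite exp_full_upset // => -> x_ncl.
  by exfalso; apply: x_ncl => W _ Wx; exists x.
apply: contrapT => no_cover.
apply: (no_full_sunflower top t1 shift fc oU Ux) => H.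
pose xs := [seq exp_insert a x_small | a <- enum_fset (H `\` val x)%fset].
have xs_above y : y \in xs -> upset x y /\ y <> x.
  case/mapP => a; rewrite in_fsetD => /andP[ax _] ->.
  by split; [apply: upset_insert|apply: exp_insert_neq].
have [z [[xz z_ncl] z_uncovered]] : exists z,
    (upset x `\` closure_in op U) z /\ ~ exists2 y, y \in xs & upset y z.
  apply: contrapT => covered; apply: no_cover; exists xs; split => // z zP.
  by apply: contrapT => z_uncovered; apply: covered; exists z.
have Hz : [disjoint H `\` val x & val z]%fset.
  apply/fdisjointP => a aHx; apply/negP => az; apply: z_uncovered.
  by exists (exp_insert a x_small); [apply/mapP; exists a|apply/upset_insertE].
have [z' [z'_full zz' Uz' Hz']] :=
  full_off_closure top t1 shift n_gt0 fc L_infinite z_ncl Hz.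
by exists z'; do 2 split => //; apply: upset_trans xz zz'.
Qed.
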